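(* Let $X,Y$ be infinite dimensional Banach lattices which are relatively $s$-decomposable for some $1\le s\le\infty$. If $a=(a_i)\in X_L$ and $b=(b_i)\in\ell_s$, then $ab:=(a_ib_i)\in Y_U$ and $$\|ab\|_{Y_U}\le D_s(X,Y)\,\|b\|_{\ell_s}\,\|a\|_{X_L}.$$
   Context: Banach lattices are real; disjoint means $|x|\wedge|y|=0$. $X,Y$ are relatively $s$-decomposable if there is $D$ with $\|\sum_{i=1}^n y_i\|_Y\le D(\sum_i(\|y_i\|_Y/\|x_i\|_X)^s)^{1/s}\|\sum_{i=1}^n x_i\|_X$ for all $n$ and all pairwise disjoint nonzero $x_1,\dots,x_n\in X$, pairwise disjoint nonzero $y_1,\dots,y_n\in Y$ (max for $s=\infty$); $D_s(X,Y)$ is the infimum of such $D$. $\mathfrak B_n(X)$ is the set of $n$-tuples of pairwise disjoint norm-one elements of $X$. For $a\in\mathbb R^n$: $\|a\|_{X_U(n)}:=\sup\{\|\sum_{i=1}^n a_ix_i\|_X:(x_i)\in\mathfrak B_n(X)\}$; $\Phi_n(a):=\inf\{\|\sum_{i=1}^n a_ix_i\|_X:(x_i)\in\mathfrak B_n(X)\}$; $\|a\|_{X_L(n)}:=\inf\{\sum_{k\in F}\Phi_n(a^k): F\text{ finite}, a^k\in\mathbb R^n, a=\sum_{k\in F}a^k\}$. $X_U$ (resp. $X_L$) is the space of real sequences $a$ with $\|a\|_{X_U}:=\sup_n\|(a_i)_{i=1}^n\|_{X_U(n)}<\infty$ (resp. $\|a\|_{X_L}:=\sup_n\|(a_i)_{i=1}^n\|_{X_L(n)}<\infty$);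 $Y_U$ is defined likewise from $Y$. *)

From HB Require Import structures.
From mathcomp Require Import all_boot all_order all_algebra.
From mathcomp Require Import all_classical all_reals all_analysis.
Unset Printing Implicit Defensive.
Import Order.TTheory GRing.Theory Num.Theory.
Import numFieldNormedType.Exports.
Local Open Scope classical_set_scope.
Local Open Scope ring_scope.

Record BanachLattice (R : realType) (X : completeNormedModType R) := {
  ble : X -> X -> Prop;
  bjoin : X -> X -> X;
  ble_refl : forall x, ble x x;
  ble_anti : forall x y, ble x y -> ble y x -> x = y;
  ble_trans : forall x y z, ble x y -> ble y z -> ble x z;
  ble_add : forall x y z, ble x y -> ble (x + z) (y + z);
  ble_scale : forall (c : R) x y, 0 <= c -> ble x y -> ble (c *: x) (c *: y);
  bjoin_ubl : forall x y, ble x (bjoin x y);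
  bjoin_ubr : forall x y, ble y (bjoin x y);
  bjoin_lub : forall x y z, ble x z -> ble y z -> ble (bjoin x y) z;
  blattice_norm : forall x y,
    ble (bjoin x (- x)) (bjoin y (- y)) -> `|x| <= `|y|
}.
Arguments BanachLattice {R} X.
Arguments ble {R X} b _ _.
Arguments bjoin {R X} b _ _.

Section BL.
Variables (R : realType) (X : completeNormedModType R) (L : BanachLattice X).

Definition bmeet (x y : X) : X := - bjoin L (- x) (- y).
Definition babs (x : X) : X := bjoin L x (- x).
Definition disjoint (x y : X) : Prop := bmeet (babs x) (babs y) = 0.

Definition frakB (n : nat) : set ('I_n -> X) :=
  [set x | (forall i, `|x i| = 1) /\ (forall i j, i != j -> disjoint (x i) (x j))].

Definition normXU_n (n : nat) (a : 'I_n -> R) : \bar R :=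
  ereal_sup [set (`|\sum_(i < n) a i *: x i|)%:E | x in frakB n].

Definition Phi_n (n : nat) (a : 'I_n -> R) : \bar R :=
  ereal_inf [set (`|\sum_(i < n) a i *: x i|)%:E | x in frakB n].

(* || a ||_{X_L(n)} : infimum over finite decompositions a = sum_{k in F} a^k,
   a finite index set F being encoded as 'I_m *)
Definition normXL_n (n : nat) (a : 'I_n -> R) : \bar R :=
  ereal_inf [set e | exists (m : nat) (c : 'I_m -> 'I_n -> R),
     (forall i, a i = \sum_(k < m) c k i) /\ e = (\sum_(k < m) Phi_n n (c k))%E].

(* || a ||_{X_U} and || a ||_{X_L} for real sequences (value in \bar R;
   membership in X_U / X_L means the value is < +oo) *)
Definition normXU (a : nat -> R) : \bar R :=
  ereal_sup [set normXU_n n (fun i : 'I_n => a i) | n in [set: nat]].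
Definition normXL (a : nat -> R) : \bar R :=
  ereal_sup [set normXL_n n (fun i : 'I_n => a i) | n in [set: nat]].

Definition infinite_dim : Prop :=
  forall n : nat, exists v : 'I_n -> X,
    forall c : 'I_n -> R, \sum_(i < n) c i *: v i = 0 -> forall i, c i = 0.
End BL.
Arguments disjoint {R X} L x y.
Arguments bmeet {R X} L x y.
Arguments babs {R X} L x.
Arguments frakB {R X} L n.
Arguments normXU_n {R X} L {n} a.
Arguments Phi_n {R X} L {n} a.
Arguments normXL_n {R X} L {n} a.
Arguments normXU {R X} L a.
Arguments normXL {R X} L a.
Arguments infinite_dim {R} X.

Definition lsnorm_fin (R : realType) (s : \bar R) (n : nat) (t : 'I_n -> R) : R :=
  match s with
  | EFin r => (\sum_(i < n) `|t i| `^ r) `^ r^-1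
  | _ => \big[Num.max/0]_(i < n) `|t i|
  end.

Arguments lsnorm_fin {R} s {n} t.

(* l_s norm of a real sequence (value in \bar R; b \in l_s iff < +oo) *)
Definition lsnorm (R : realType) (s : \bar R) (b : nat -> R) : \bar R :=
  ereal_sup [set (lsnorm_fin s (fun i : 'I_n => b i))%:E | n in [set: nat]].

Arguments lsnorm {R} s b.

Section Decomp.
Variables (R : realType) (X Y : completeNormedModType R)
  (LX : BanachLattice X) (LY : BanachLattice Y) (s : \bar R).

Definition decomp_const (D : R) : Prop :=
  forall (n : nat) (x : 'I_n -> X) (y : 'I_n -> Y),
    (forall i, x i != 0) -> (forall i j, i != j -> disjoint LX (x i) (x j)) ->
    (forall i, y i != 0) -> (forall i j, i != j -> disjoint LY (y i) (y j)) ->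
    `|\sum_(i < n) y i| <=
      D * lsnorm_fin s (fun i => `|y i| / `|x i|) * `|\sum_(i < n) x i|.

Definition rel_decomposable : Prop := exists D : R, decomp_const D.

Definition Ds : \bar R := ereal_inf [set D%:E | D in decomp_const].
End Decomp.
Arguments decomp_const {R X Y} LX LY s D.
Arguments rel_decomposable {R X Y} LX LY s.
Arguments Ds {R X Y} LX LY s.

(* Fix x in B_n(X), y in B_n(Y) and a decomposition a = sum_k a^k.  The
   vectors a^k_i x_i (resp. a^k_i b_i y_i) are pairwise disjoint and their norms
   have ratios |b_i|, so relative decomposability gives
   ||sum_i a_i b_i y_i|| <= sum_k ||sum_i a^k_i b_i y_i||
                         <= D ||b||_s sum_k ||sum_i a^k_i x_i||.
   Taking the infimum over x and over the decompositions, then the supremum over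
   y and n, bounds ||ab||_{Y_U} by D ||b||_s ||a||_{X_L} for every admissible D.
   Decomposability only speaks about nonzero vectors, so zero coefficients are
   first replaced by a small e > 0, at a cost that vanishes with e.  Infinite
   dimensionality only serves to produce nonzero vectors, which force D >= 1. *)

From Pilot Require Import Defs.
From mathcomp Require Import all_boot all_order all_algebra.
From mathcomp Require Import all_classical all_reals all_analysis.
From mathcomp Require Import ring lra.
Import Order.TTheory GRing.Theory Num.Theory.
Import numFieldNormedType.Exports.
Local Open Scope ring_scope.

Arguments ble_anti {R X} b {x y}.
Arguments ble_trans {R X} b {x y z}.
Arguments ble_add {R X} b {x y} z.
Arguments ble_scale {R X} b {c x y}.
Arguments bjoin_ubl {R X} b x y.
Arguments bjoin_ubr {R X} b x y.
Arguments bjoin_lub {R X} b {x y z}.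

Section BanachLatticeTheory.
Variables (R : realType) (X : completeNormedModType R) (L : BanachLattice X).
Local Notation le := (ble L).
Local Notation join := (bjoin L).
Local Notation meet := (bmeet L).

Lemma ble_oppr x y : le x y -> le (- y) (- x).
Proof. by move=> /(ble_add L (- x - y)); rewrite addrA subrr add0r addrC addrNK. Qed.

Lemma ble_addl x y z : le x y -> le (z + x) (z + y).
Proof. by move=> /(ble_add L z); rewrite (addrC x) (addrC y). Qed.

Lemma ble_scaler (a b : R) x : le 0 x -> 0 <= a <= b -> le (a *: x) (b *: x).
Proof.
move=> x0 /andP[a0 ab].
have ba : 0 <= b - a by rewrite subr_ge0.
have := ble_add L (a *: x) (ble_scale L ba x0).
by rewrite scaler0 add0r -scalerDl subrK.
Qed.

Lemma bjoinC x y : join x y = join y x.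
Proof.
by apply: ble_anti; apply: bjoin_lub; first [apply: bjoin_ubl | apply: bjoin_ubr].
Qed.

Lemma bjoinZ (c : R) x y : 0 < c -> join (c *: x) (c *: y) = c *: join x y.
Proof.
move=> c0; have c0' : c != 0 by rewrite gt_eqF.
apply: ble_anti.
  by apply: bjoin_lub; apply: ble_scale; rewrite ?ltW //; [apply: bjoin_ubl | apply: bjoin_ubr].
have ci : 0 <= c^-1 by rewrite invr_ge0 ltW.
have h : le (join x y) (c^-1 *: join (c *: x) (c *: y)).
  apply: bjoin_lub; [rewrite -{1}(scalerK c0' x) | rewrite -{1}(scalerK c0' y)];
    apply: ble_scale => //; [apply: bjoin_ubl | apply: bjoin_ubr].
by have := ble_scale L (ltW c0) h; rewrite scalerA divff // scale1r.
Qed.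

Lemma bjoin00 : join 0 0 = 0.
Proof. by apply: ble_anti; [apply: bjoin_lub; apply: ble_refl | apply: bjoin_ubl]. Qed.

Lemma babsZ (c : R) x : babs L (c *: x) = `|c| *: babs L x.
Proof.
rewrite /babs; have [c0|c0|->] := ltrgtP c 0.
- have -> : c *: x = (- c) *: (- x) by rewrite scalerN scaleNr opprK.
  by rewrite ltr0_norm // -scalerN opprK bjoinZ ?oppr_gt0 // bjoinC.
- by rewrite gtr0_norm // -scalerN bjoinZ.
- by rewrite normr0 !scale0r oppr0 bjoin00.
Qed.

Lemma babs_ge0 x : le 0 (babs L x).
Proof.
set A := babs L x.
have h1 : le 0 (A - x) by have := ble_add L (- x) (bjoin_ubl L x (- x)); rewrite subrr.
have h2 : le (A - x) (A + A) by apply: ble_addl; apply: bjoin_ubr.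
have half : 0 <= 2^-1 :> R by rewrite invr_ge0 ler0n.
suff e : 2^-1 *: (A + A) = A.
  by have := ble_scale L half (ble_trans L h1 h2); rewrite scaler0 e.
have -> : A + A = 2%:R *: A by rewrite scaler_nat mulr2n.
by rewrite scalerA mulVf ?pnatr_eq0 // scale1r.
Qed.

Lemma bmeet_lel x y : le (meet x y) x.
Proof. by rewrite /bmeet -{2}[x]opprK; apply: ble_oppr; apply: bjoin_ubl. Qed.

Lemma bmeet_ler x y : le (meet x y) y.
Proof. by rewrite /bmeet -{2}[y]opprK; apply: ble_oppr; apply: bjoin_ubr. Qed.

Lemma bmeet_glb x y z : le z x -> le z y -> le z (meet x y).
Proof.
move=> zx zy; rewrite /bmeet -[z]opprK; apply: ble_oppr.
by apply: bjoin_lub; apply: ble_oppr.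
Qed.

Lemma bmeetZ (c : R) x y : 0 < c -> meet (c *: x) (c *: y) = c *: meet x y.
Proof. by move=> c0; rewrite /bmeet -!scalerN bjoinZ // scalerN. Qed.

Lemma disjointZ {c d : R} {x y : X} : c != 0 -> d != 0 ->
  Defs.disjoint L x y -> Defs.disjoint L (c *: x) (d *: y).
Proof.
rewrite /Defs.disjoint !babsZ => c0 d0 xy.
(* [|c| |x| /\ |d| |y| <= g (|x| /\ |y|) = 0] for [g = max |c| |d|] *)
set g := Num.max `|c| `|d|.
have g0 : 0 < g by rewrite lt_max normr_gt0 c0.
apply: ble_anti.
  rewrite -(scaler0 _ g) -xy -bmeetZ //.
  apply: bmeet_glb.
    apply: ble_trans (bmeet_lel _ _) _; apply: ble_scaler; first exact: babs_ge0.
    by rewrite normr_ge0 le_max lexx.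
  apply: ble_trans (bmeet_ler _ _) _; apply: ble_scaler; first exact: babs_ge0.
  by rewrite normr_ge0 le_max lexx orbT.
by apply: bmeet_glb; [rewrite -(scaler0 _ `|c|) | rewrite -(scaler0 _ `|d|)];
  apply: ble_scale => //; exact: babs_ge0.
Qed.

End BanachLatticeTheory.
Arguments disjointZ {R X L c d x y}.

Section LsNorm.
Context {R : realType}.
Implicit Types (s : \bar R) (a b p : R).

Lemma powRD_le p a b : 0 < p <= 1 -> 0 <= a -> 0 <= b ->
  (a + b) `^ p <= a `^ p + b `^ p.
Proof.
move=> /andP[p0 p1] a0 b0.
have [t0|tp] := eqVneq (a + b) 0.
  have /andP[/eqP -> /eqP ->] : (a == 0) && (b == 0) by rewrite -paddr_eq0 // t0.
  by rewrite addr0 powR0 ?gt_eqF // addr0.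
have t0 : 0 < a + b by rewrite lt0r tp addr_ge0.
set t := a + b in t0 tp *.
(* concavity of [u |-> u `^ p] at 0: [u `^ p >= t `^ p * (u / t)] on [[0, t]] *)
have chord u : 0 <= u <= t -> t `^ p * (u / t) <= u `^ p.
  move=> /andP[u0 ut].
  have -> : u `^ p = t `^ p * (u / t) `^ p.
    by rewrite -powRM ?divr_ge0 ?(ltW t0) // mulrC divfK.
  rewrite ler_wpM2l ?powR_ge0 //.
  have [->|uz] := eqVneq u 0; first by rewrite mul0r powR_ge0.
  have u0' : 0 < u by rewrite lt0r uz u0.
  by apply: ger1_powR => //; rewrite divr_gt0 //= ler_pdivrMr // mul1r.
have -> : t `^ p = t `^ p * (a / t) + t `^ p * (b / t).
  by rewrite -mulrDr -mulrDl divff // mulr1.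
by rewrite lerD ?chord ?a0 ?b0 /t ?lerDl ?lerDr.
Qed.

Lemma lsnorm_fin_ge0 s {n} (t : 'I_n -> R) : 0 <= lsnorm_fin s t.
Proof.
case: s => [r| |] /=; rewrite ?powR_ge0 //;
  by elim/big_ind: _ => // x y hx hy; rewrite le_max hx.
Qed.

Lemma lsnorm_fin_normr s {n} (t : 'I_n -> R) :
  lsnorm_fin s (fun i => `|t i|) = lsnorm_fin s t.
Proof. by case: s => [r| |] /=; under eq_bigr do rewrite normr_id. Qed.

Lemma lsnorm_fin_ord1 s (t : 'I_1 -> R) : (1%:E <= s)%E -> lsnorm_fin s t = `|t ord0|.
Proof.
case: s => [r| |] //= r1; last by rewrite big_ord_recl big_ord0 max_l.
rewrite lee_fin in r1.
by rewrite big_ord1 -powRrM mulfV ?powRr1 // gt_eqF // (lt_le_trans ltr01 r1).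
Qed.

Lemma lsnorm_fin_perturb s {n} (t : 'I_n -> R) : (1%:E <= s)%E ->
  exists2 k : R, 0 <= k & forall (e : R) (u : 'I_n -> R), 0 < e ->
    (forall i, `|u i| = `|t i| \/ `|u i| = e) ->
    lsnorm_fin s u <= lsnorm_fin s t + k * e.
Proof.
case: s => [r| |] //= r1; last first.
  exists 1 => // e u e0 hu; rewrite mul1r.
  have t0 : 0 <= \big[Num.max/0]_(i < n) `|t i| := lsnorm_fin_ge0 +oo%E t.
  apply: bigmax_le => [|i _]; first by rewrite addr_ge0 // ltW.
  have [->|->] := hu i; last by rewrite lerDr.
  by apply: le_trans (le_bigmax 0 (fun i => `|t i|) i) _; rewrite lerDl ltW.
rewrite lee_fin in r1.
have r0 : 0 < r by rewrite (lt_le_trans ltr01 r1).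
have ir : 0 < r^-1 <= 1 by rewrite invr_gt0 r0 invf_le1.
have sum_ge0 (v : 'I_n -> R) : 0 <= \sum_(i < n) `|v i| `^ r.
  by rewrite sumr_ge0 // => i _; rewrite powR_ge0.
exists (n%:R `^ r^-1); first exact: powR_ge0.
move=> e u e0 hu.
apply: (@le_trans _ _ ((\sum_(i < n) `|t i| `^ r + n%:R * e `^ r) `^ r^-1)).
  apply: ge0_ler_powR; rewrite ?nnegrE ?invr_ge0 ?(ltW r0) ?addr_ge0 ?mulr_ge0 ?powR_ge0 //.
  have -> : n%:R * e `^ r = \sum_(i < n) e `^ r by rewrite sumr_const card_ord mulr_natl.
  rewrite -big_split /=; apply: ler_sum => i _.
  by have [->|->] := hu i; rewrite ?lerDl ?lerDr powR_ge0.
have ne0 : 0 <= n%:R * e `^ r by rewrite mulr_ge0 ?powR_ge0.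
apply: le_trans (powRD_le _ _ _ ir (sum_ge0 t) ne0) _.
by rewrite lerD2l powRM ?ler0n ?powR_ge0 // -powRrM mulfV ?gt_eqF // powRr1 // ltW.
Qed.

End LsNorm.

Section Perturbation.
Context {R : realFieldType}.

Lemma ler_of_forall_small (w A M : R) :
  (forall e, 0 < e <= 1 -> w <= A + e * M) -> w <= A.
Proof.
move=> h; apply/ler_addgt0Pr => d d0.
have M1 : 0 < `|M| + 1 by rewrite ltr_wpDl.
pose e := Num.min 1 (d / (`|M| + 1)).
have /andP[e0 e1] : 0 < e <= 1 by rewrite lt_min ltr01 divr_gt0 //= ge_min lexx.
have ed : e * (`|M| + 1) <= d by rewrite -ler_pdivlMr // ge_min lexx orbT.
apply: le_trans (h e _) _; first by rewrite e0 e1.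
by rewrite lerD2l; have := ler_norm M; nra.
Qed.

Lemma lee_of_forall_small (x : \bar R) (A M : R) :
  (forall e, 0 < e <= 1 -> (x <= (A + e * M)%:E)%E) -> (x <= A%:E)%E.
Proof.
case: x => [r| |] h; last exact: leNye.
  by rewrite lee_fin; apply: (ler_of_forall_small _ _ M) => e /h; rewrite lee_fin.
by have := h 1; rewrite ltr01 lexx leye_eq => /(_ isT).
Qed.

Definition nonzero_or (e t : R) : R := if t == 0 then e else t.

Lemma nonzero_or_neq0 e t : 0 < e -> nonzero_or e t != 0.
Proof. by move=> e0; rewrite /nonzero_or; have [_|//] := eqVneq t 0; exact: lt0r_neq0. Qed.

Lemma normr_nonzero_or e t : 0 < e ->
  `|nonzero_or e t| = `|t| \/ `|nonzero_or e t| = e.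
Proof. by rewrite /nonzero_or; case: eqP => _ e0; [right; rewrite gtr0_norm | left]. Qed.

Lemma normr_nonzero_orB e t : 0 < e -> `|nonzero_or e t - t| <= e.
Proof.
move=> e0; rewrite /nonzero_or; case: eqP => [->|_]; last by rewrite subrr normr0 ltW.
by rewrite subr0 gtr0_norm.
Qed.

Lemma normr_mul_nonzero_orB e c b : 0 < e <= 1 ->
  `|c * b - nonzero_or e c * nonzero_or e b| <= e * (`|c| + `|b| + 1).
Proof.
move=> /andP[e0 e1]; have ne : `|e| = e by rewrite gtr0_norm.
have := normr_ge0 c; have := normr_ge0 b.
rewrite /nonzero_or; case: eqP => [->|_]; case: eqP => [->|_];
  rewrite ?subrr ?mul0r ?mulr0 ?sub0r ?normrN ?normrM ?ne ?normr0; nra.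
Qed.

Lemma ler_norm_sumZ_shift {V : normedModType R} {n} (u v : 'I_n -> R) (z : 'I_n -> V) :
  (forall i, `|z i| = 1) ->
  `|\sum_(i < n) u i *: z i| <= `|\sum_(i < n) v i *: z i| + \sum_(i < n) `|u i - v i|.
Proof.
move=> z1; rewrite -[X in `|X|](subrK (\sum_(i < n) v i *: z i)) addrC.
apply: le_trans (ler_normD _ _) _; rewrite lerD2l -sumrB.
apply: le_trans (ler_norm_sum _ _ _) _; apply: ler_sum => i _.
by rewrite -scalerBl normrZ z1 mulr1.
Qed.

Lemma scaler_norm1_neq0 {V : normedModType R} {c : R} {z : V} :
  `|z| = 1 -> c != 0 -> c *: z != 0.
Proof. by move=> z1 c0; rewrite scaler_eq0 negb_or c0 -normr_eq0 z1 oner_neq0. Qed.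

End Perturbation.

Section NormBounds.
Context {R : realType}.

Lemma le_mul_ereal_inf (x : \bar R) (k : R) (S : set \bar R) : 0 < k ->
  (forall e, S e -> (x <= k%:E * e)%E) -> (x <= k%:E * ereal_inf S)%E.
Proof.
move=> k0 h; rewrite -lee_pdivrMl //.
by apply: le_ereal_inf_tmp => e Se; rewrite lee_pdivrMl // h.
Qed.

Lemma infinite_dim_neq0 (Z : completeNormedModType R) :
  infinite_dim Z -> exists z : Z, z != 0.
Proof.
move=> /(_ 1%N) [v hv]; exists (v ord0); apply/eqP => v0.
have := hv (fun _ => 1) _ ord0; rewrite big_ord1 v0 scaler0 => /(_ erefl) /eqP.
by rewrite oner_eq0.
Qed.

Variables (Z : completeNormedModType R) (L : BanachLattice Z).

Lemma Phi_n_ge0 {n} (c : 'I_n -> R) : (0 <= Phi_n L c)%E.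
Proof. by apply: le_ereal_inf_tmp => _ [x _ <-]; rewrite lee_fin. Qed.

Lemma normXL_n_ge0 {n} (c : 'I_n -> R) : (0 <= normXL_n L c)%E.
Proof.
apply: le_ereal_inf_tmp => _ [m [d [_ ->]]].
by apply: sume_ge0 => k _; exact: Phi_n_ge0.
Qed.

Lemma normXL_ge0 (a : nat -> R) : (0 <= normXL L a)%E.
Proof.
apply: le_trans (normXL_n_ge0 (fun i : 'I_0 => a i)) _.
by apply: ereal_sup_ubound; exists 0%N.
Qed.

End NormBounds.

Lemma lsnorm_ge0 (R : realType) (s : \bar R) (b : nat -> R) : (0 <= lsnorm s b)%E.
Proof.
apply: (@le_trans _ _ (lsnorm_fin s (fun i : 'I_0 => b i))%:E).
  by rewrite lee_fin lsnorm_fin_ge0.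
by apply: ereal_sup_ubound; exists 0%N.
Qed.

Section Decomposition.
Variables (R : realType) (X Y : completeNormedModType R).
Variables (LX : BanachLattice X) (LY : BanachLattice Y) (s : \bar R) (D : R).
Hypothesis hD : decomp_const LX LY s D.

Lemma decomp_const_frakB_neq0 {n} (c b : 'I_n -> R) (x : 'I_n -> X) (y : 'I_n -> Y) :
  frakB LX n x -> frakB LY n y -> (forall i, c i != 0) -> (forall i, b i != 0) ->
  `|\sum_(i < n) (c i * b i) *: y i| <= D * lsnorm_fin s b * `|\sum_(i < n) c i *: x i|.
Proof.
move=> [x1 xdisj] [y1 ydisj] c0 b0.
have cb0 i : c i * b i != 0 by rewrite mulf_neq0.
have := @hD n (fun i => c i *: x i) (fun i => (c i * b i) *: y i)
  (fun i => scaler_norm1_neq0 (x1 i) (c0 i))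
  (fun i j ij => disjointZ (c0 i) (c0 j) (xdisj i j ij))
  (fun i => scaler_norm1_neq0 (y1 i) (cb0 i))
  (fun i j ij => disjointZ (cb0 i) (cb0 j) (ydisj i j ij)).
suff -> : (fun i => `|(c i * b i) *: y i| / `|c i *: x i|) = (fun i => `|b i|).
  by rewrite lsnorm_fin_normr.
apply: funext => i; rewrite !normrZ x1 y1 !mulr1.
by rewrite mulrAC divff ?mul1r // normr_eq0.
Qed.

Hypothesis s1 : (1%:E <= s)%E.

Lemma decomp_const_frakB {n} (c b : 'I_n -> R) (x : 'I_n -> X) (y : 'I_n -> Y) :
  0 <= D -> frakB LX n x -> frakB LY n y ->
  `|\sum_(i < n) (c i * b i) *: y i| <= D * lsnorm_fin s b * `|\sum_(i < n) c i *: x i|.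
Proof.
move=> D0 xB yB; have [k k0 hk] := lsnorm_fin_perturb s b s1.
set l := lsnorm_fin s b; set q := `|\sum_(i < n) c i *: x i|.
set K := \sum_(i < n) (`|c i| + `|b i| + 1).
apply: (ler_of_forall_small _ _ (D * k * q + D * l * n%:R + D * k * n%:R + K)).
move=> e /andP[e0 e1].
pose g i := nonzero_or e (c i); pose be i := nonzero_or e (b i).
have hgbe := decomp_const_frakB_neq0 g be _ _ xB yB
  (fun i => nonzero_or_neq0 _ _ e0) (fun i => nonzero_or_neq0 _ _ e0).
have hbe : lsnorm_fin s be <= l + k * e.
  by apply: hk => // i; exact: normr_nonzero_or.
have hg : `|\sum_(i < n) g i *: x i| <= q + n%:R * e.
  apply: le_trans (ler_norm_sumZ_shift g c _ xB.1) _; rewrite lerD2l.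
  have -> : n%:R * e = \sum_(i < n) e by rewrite sumr_const card_ord mulr_natl.
  by apply: ler_sum => i _; exact: normr_nonzero_orB.
have hcb : `|\sum_(i < n) (c i * b i) *: y i|
    <= `|\sum_(i < n) (g i * be i) *: y i| + e * K.
  apply: le_trans (ler_norm_sumZ_shift _ (fun i => g i * be i) _ yB.1) _.
  rewrite lerD2l mulr_sumr; apply: ler_sum => i _.
  by apply: normr_mul_nonzero_orB; rewrite e0.
have l0 : 0 <= l := lsnorm_fin_ge0 s b.
have q0 : 0 <= q := normr_ge0 _.
have hprod : D * lsnorm_fin s be * `|\sum_(i < n) g i *: x i|
    <= D * (l + k * e) * (q + n%:R * e).
  by rewrite ler_pM ?mulr_ge0 ?lsnorm_fin_ge0 // ler_wpM2l.
have n0 : 0 <= n%:R :> R := ler0n _ n.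
have Dkne : D * k * n%:R * (e * e) <= D * k * n%:R * e.
  by rewrite ler_wpM2l ?mulr_ge0 // ger_pMr.
apply: le_trans hcb _; apply: le_trans (lerD (le_trans hgbe hprod) (lexx _)) _.
nra.
Qed.

Lemma decomp_const_ge1 {x0 : X} {y0 : Y} : x0 != 0 -> y0 != 0 -> 1 <= D.
Proof.
move=> x00 y00.
have no_pair (i j : 'I_1) : i != j -> False by rewrite !ord1.
have := @hD 1%N (fun _ => x0) (fun _ => y0) (fun _ => x00)
  (fun i j ij => False_ind _ (no_pair i j ij)) (fun _ => y00)
  (fun i j ij => False_ind _ (no_pair i j ij)).
rewrite !big_ord1 lsnorm_fin_ord1 // ger0_norm ?divr_ge0 // -mulrA divfK ?normr_eq0 //.
by rewrite -{1}[`|y0|]mul1r ler_pM2r ?normr_gt0.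
Qed.

Lemma normXU_n_le {n} (a b : 'I_n -> R) (k : R) :
  0 <= D -> 0 < k -> D * lsnorm_fin s b <= k ->
  (normXU_n LY (fun i => (a i * b i)%R) <= k%:E * normXL_n LX a)%E.
Proof.
move=> D0 k0 Dbk; apply: ge_ereal_sup => _ [y yB <-].
apply: le_mul_ereal_inf => // _ [m [c [ac ->]]].
have -> : \sum_(i < n) (a i * b i) *: y i =
    \sum_(j < m) \sum_(i < n) (c j i * b i) *: y i.
  by rewrite exchange_big; apply: eq_bigr => i _; rewrite ac mulr_suml scaler_suml.
apply: le_trans (_ : (\sum_(j < m) `|\sum_(i < n) (c j i * b i) *: y i|)%:E <= _)%E.
  by rewrite lee_fin; exact: ler_norm_sum.
rewrite -sumEFin ge0_sume_distrr => [|j _]; last exact: Phi_n_ge0.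
apply: lee_sum => j _; apply: le_mul_ereal_inf => // _ [x xB <-].
rewrite -EFinM lee_fin; apply: le_trans (decomp_const_frakB (c j) b _ _ D0 xB yB) _.
by rewrite ler_wpM2r.
Qed.

Lemma normXU_le (a b : nat -> R) (l mu : R) :
  0 < D -> lsnorm s b = l%:E -> normXL LX a = mu%:E ->
  (normXU LY (fun i => (a i * b i)%R) <= (D * l * mu)%:E)%E.
Proof.
move=> D0 bl amu; apply: ge_ereal_sup => _ [n _ <-].
have l0 : 0 <= l by rewrite -lee_fin -bl lsnorm_ge0.
have mu0 : 0 <= mu by rewrite -lee_fin -amu normXL_ge0.
have bnl : lsnorm_fin s (fun i : 'I_n => b i) <= l.
  by rewrite -lee_fin -bl; apply: ereal_sup_ubound; exists n.
have anmu : (normXL_n LX (fun i : 'I_n => a i) <= mu%:E)%E.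
  by rewrite -amu; apply: ereal_sup_ubound; exists n.
apply: (lee_of_forall_small _ _ (D * mu)) => e /andP[e0 _].
have kpos : 0 < D * (l + e) by rewrite mulr_gt0 // ltr_wpDl.
apply: le_trans (normXU_n_le _ _ _ (ltW D0) kpos _) _.
  by apply: ler_wpM2l; [exact: ltW | apply: le_trans bnl _; rewrite lerDl ltW].
have -> : D * l * mu + e * (D * mu) = D * (l + e) * mu by ring.
rewrite (EFinM (D * (l + e)) mu); apply: lee_wpmul2l anmu.
by rewrite lee_fin ltW.
Qed.

End Decomposition.
Arguments decomp_const_ge1 {R X Y LX LY s D} hD s1 {x0 y0}.
Arguments normXU_le {R X Y LX LY s D}.

Theorem mainTheorem10 (R : realType) (X Y : completeNormedModType R)
  (LX : BanachLattice X) (LY : BanachLattice Y) (s : \bar R) (a b : nat -> R) :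
  infinite_dim X -> infinite_dim Y ->
  (1%:E <= s)%E ->
  rel_decomposable LX LY s ->
  (normXL LX a < +oo)%E -> (lsnorm s b < +oo)%E ->
  (normXU LY (fun i => (a i * b i)%R) < +oo)%E /\
  (normXU LY (fun i => (a i * b i)%R) <= Ds LX LY s * lsnorm s b * normXL LX a)%E.
Proof.
move=> /infinite_dim_neq0[x0 x00] /infinite_dim_neq0[y0 y00] s1 [D0 hD0] afin bfin.
have [l bl] : exists l, lsnorm s b = l%:E.
  by exists (fine (lsnorm s b)); rewrite fineK // ge0_fin_numE ?lsnorm_ge0.
have [mu amu] : exists mu, normXL LX a = mu%:E.
  by exists (fine (normXL LX a)); rewrite fineK // ge0_fin_numE ?normXL_ge0.
have bound D : decomp_const LX LY s D ->
    (normXU LY (fun i => (a i * b i)%R) <= (D * l * mu)%:E)%E.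
  move=> hD; apply: (normXU_le hD s1) => //.
  exact: lt_le_trans ltr01 (decomp_const_ge1 hD s1 x00 y00).
split; first exact: le_lt_trans (bound _ hD0) (ltry _).
have lmu0 : 0 <= l * mu by rewrite -lee_fin EFinM -bl -amu mule_ge0 ?lsnorm_ge0 ?normXL_ge0.
rewrite bl amu -muleA -EFinM muleC.
have [lmu_eq0|lmu_neq0] := eqVneq (l * mu) 0.
  by rewrite lmu_eq0 mul0e; have := bound _ hD0; rewrite -mulrA lmu_eq0 mulr0.
apply: le_mul_ereal_inf; first by rewrite lt0r lmu_neq0.
by move=> _ [D hD <-]; rewrite -EFinM mulrC mulrA; exact: bound.
Qed.
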